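(* Let $q$ be a power of an odd prime, let $r\ge1$ be an integer and $t=2r+1$. If for some $\mu\in\mathbb{F}_q$ the polynomial $x^{2r+1}-\mu\in\mathbb{F}_q[x]$ is irreducible, then \[ \chi(G_{q^t})\le\frac{2r+5}{3}\,q^{\frac{4r}{3}+1}+(2r+1)q^{r+1}. \]
   Context: For a power $Q$ of an odd prime, the graph $G_Q$ has vertex set $\mathbb{F}_Q\times\mathbb{F}_Q$, and distinct vertices $(x_1,x_2)$, $(y_1,y_2)$ are adjacent if and only if $(x_1+y_1)^2=x_2+y_2$; $G_Q$ has no loops. $\chi$ denotes the chromatic number. *)

From Stdlib Require Import Reals.
From HB Require Import structures.
From mathcomp Require Import all_boot all_order all_algebra all_field.
Set Implicit Arguments. Unset Strict Implicit. Unset Printing Implicit Defensive.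
Import GRing.Theory.

Definition colorableb (V : finType) (e : rel V) (k : nat) : bool :=
  [exists f : {ffun V -> 'I_k},
     [forall x, forall y, ((x != y) && e x y) ==> (f x != f y)]].

Lemma colorable_exists (V : finType) (e : rel V) : exists k, colorableb e k.
Proof.
exists #|V|; apply/existsP; exists [ffun x => enum_rank x].
apply/forallP => x; apply/forallP => y; apply/implyP => /andP [nxy _].
rewrite !ffunE; apply: contra nxy => /eqP H; apply/eqP; exact: enum_rank_inj.
Qed.

Definition chromatic_number (V : finType) (e : rel V) : nat :=
  ex_minn (colorable_exists e).

Definition G_adj (K : finFieldType) : rel (K * K)%type :=
  fun u v => (u != v) && ((u.1 + v.1) ^+ 2 == u.2 + v.2)%R.
Arguments G_adj K : clear implicits.

(* Let E = F[X]/(X^t - mu) with t = 2r + 1, a field of order q^t and hence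
   isomorphic to K, so it suffices to colour G_E.  Put d(x) = x2 - 2 x1^2 for
   x = (x1, x2); adjacency x ~ y gives d(x) + d(y) = - (x1 - y1)^2.  Colour x by
   the least a <= r such that the pair of coefficients of d(x) at the positions
   [probe a] is nonzero, together with the r + 1 coefficients of x1 outside the
   window [a, a + r), and a bit that tells this pair from its opposite.  If
   x ~ y share a colour, x1 - y1 is supported in the window, so its square (even
   reduced modulo X^t - mu) vanishes at the probes of a; the pairs of x and y
   are then opposite, and their bits differ since char F <> 2.  Vertices with
   d = 0 form an independent set and get one more colour.  This uses
   2 (r + 1) q^(r+1) + 1 colours, which is below the stated bound.
   The isomorphism K -> E sends a primitive root a of K to a root b in E of the
   minimal polynomial of a over F_p, which divides X^|K| - X; every relation
   between powers of a over F_p then also holds for b. *)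

From Stdlib Require Import Reals Lra.
From HB Require Import structures.
From mathcomp Require Import all_boot all_order all_algebra all_field.
From mathcomp Require Import ring zify cyclic.
Set Implicit Arguments. Unset Strict Implicit. Unset Printing Implicit Defensive.
Import GRing.Theory Pdiv.CommonRing Pdiv.RingMonic Pdiv.Field.

Local Open Scope ring_scope.

Lemma colorableb_proper (V T : finType) (e : rel V) (c : V -> T) :
  (forall x y, x != y -> e x y -> c x != c y) -> colorableb e #|T|.
Proof.
move=> c_proper; apply/existsP; exists [ffun x => enum_rank (c x)].
apply/forallP => x; apply/forallP => y; apply/implyP => /andP[x_neq_y xy].
by rewrite !ffunE (inj_eq enum_rank_inj) c_proper.
Qed.

Lemma colorableb_hom (V W : finType) (e : rel V) (e' : rel W) (h : V -> W) n :
    (forall x y, x != y -> e x y -> (h x != h y) && e' (h x) (h y)) ->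
  colorableb e' n -> colorableb e n.
Proof.
move=> h_hom /existsP[c /forallP c_proper]; apply/existsP; exists [ffun x => c (h x)].
apply/forallP => x; apply/forallP => y; apply/implyP => /andP[x_neq_y xy].
rewrite !ffunE; have /forallP/(_ (h y))/implyP := c_proper (h x).
by apply; apply: h_hom.
Qed.

Lemma chromatic_number_le (V : finType) (e : rel V) n :
  colorableb e n -> (chromatic_number e <= n)%N.
Proof. by rewrite /chromatic_number; case: ex_minnP => m _; apply. Qed.

Lemma G_adj_rmorph (K E : finFieldType) (f : {rmorphism K -> E}) (x y : K * K) :
  G_adj K x y -> G_adj E (f x.1, f x.2) (f y.1, f y.2).
Proof.
case/andP => x_neq_y /eqP xy; apply/andP; split.
  by apply: contra x_neq_y; rewrite xpair_eqE !(inj_eq (fmorph_inj f)) -pair_eqE.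
by rewrite /= -!rmorphD -rmorphXn xy.
Qed.

Lemma colorableb_G_adj_rmorph (K E : finFieldType) (f : {rmorphism K -> E}) n :
  colorableb (G_adj E) n -> colorableb (G_adj K) n.
Proof.
apply: (colorableb_hom (h := fun x => (f x.1, f x.2))) => x y _ xy.
by have adj := G_adj_rmorph f xy; rewrite adj andbT; case/andP: adj.
Qed.

Lemma coef_rmodp_XnsubC (R : comNzRingType) (n : nat) (mu : R) (c : {poly R}) m :
  (size c <= 2 * n)%N -> (m < n)%N ->
  (rmodp c ('X^n - mu%:P))`_m = c`_m + mu * c`_(m + n).
Proof.
move=> c_small m_lt_n; have n_gt0 : (0 < n)%N by apply: leq_ltn_trans m_lt_n.
have c_div : c = drop_poly n c * ('X^n - mu%:P) + (take_poly n c + mu *: drop_poly n c).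
  rewrite -{1}(poly_take_drop n c) mulrBr -mul_polyC [_ * mu%:P]mulrC; ring.
rewrite {1}c_div rmodp_addl_mul_small ?monicXnsubC //; last first.
  rewrite size_XnsubC // ltnS (leq_trans (size_polyD _ _)) // geq_max size_take_poly.
  by rewrite (leq_trans (size_scale_leq _ _)) // size_drop_poly leq_subLR addnn -mul2n.
by rewrite coefD coefZ coef_take_poly m_lt_n coef_drop_poly.
Qed.

Lemma coef_sqr_out_window (R : nzRingType) (v : {poly R}) (a n e : nat) :
  (forall i, (i < a)%N || (a + n <= i)%N -> v`_i = 0) ->
  (e < 2 * a)%N || (2 * (a + n) <= e.+1)%N -> (v * v)`_e = 0.
Proof.
move=> v_supp e_out; rewrite coefM big1 // => j _.
have [j_out | j_in] := boolP ((j < a)%N || (a + n <= j)%N).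
  by rewrite v_supp ?mul0r.
rewrite (v_supp (e - j)%N) ?mulr0 //.
move: j_in e_out (ltn_ord j); rewrite negb_or -leqNgt -ltnNge; lia.
Qed.

(* [half f] selects one element from each two-element orbit {z, f z} of f. *)
Definition half (T : finType) (f : T -> T) (z : T) : bool :=
  (enum_rank z < enum_rank (f z))%N.

Lemma half_inv (T : finType) (f : T -> T) (z : T) :
  involutive f -> z != f z -> half f (f z) = ~~ half f z.
Proof.
move=> fK z_neq; rewrite /half fK ltnNge leq_eqVlt negb_or val_eqE.
by rewrite (inj_eq enum_rank_inj) z_neq.
Qed.

Lemma pair_neq_opp (F : fieldType) (z : F * F) :
  (2%:R : F) != 0 -> z != 0 -> z != - z.
Proof.
move=> two_neq0; have opp_eq0 (c : F) : c == - c -> c == 0.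
  by rewrite -addr_eq0 -mulr2n -mulr_natl mulf_eq0 (negbTE two_neq0).
by case: z => c d; apply: contra; rewrite !xpair_eqE => /andP[/opp_eq0 -> /opp_eq0].
Qed.

Section QuotientColouring.
Variables (F : finFieldType) (r : nat) (mu : F).
Local Notation t := (2 * r + 1)%N.
Hypothesis P_mi : monic_irreducible_poly ('X^t - mu%:P).
Local Notation E := {poly %/ ('X^t - mu%:P) with P_mi}.

Lemma size_qfpoly_le (z : E) : (size (z : {poly F}) <= t)%N.
Proof.
by rewrite -ltnS (leq_trans (size_mk_monic z)) // (mk_monicE P_mi) size_XnsubC ?addn1.
Qed.

Lemma coef_qfpoly_out (z : E) i : (t <= i)%N -> (z : {poly F})`_i = 0.
Proof. by move=> t_le_i; rewrite nth_default // (leq_trans (size_qfpoly_le z)). Qed.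

Lemma coef_qfpolyM (x y : E) m : (m < t)%N ->
  ((x * y : E) : {poly F})`_m
    = ((x : {poly F}) * y)`_m + mu * ((x : {poly F}) * y)`_(m + t).
Proof.
move=> m_lt_t.
have -> : ((x * y : E) : {poly F}) = rmodp ((x : {poly F}) * y) ('X^t - mu%:P).
  by rewrite poly_of_qpolyM; congr rmodp; exact: mk_monicE.
rewrite coef_rmodp_XnsubC // (leq_trans (size_polyMleq _ _)) //.
rewrite (leq_trans (leq_pred _)) //.
by rewrite [X in (_ <= X)%N]mul2n -addnn leq_add ?size_qfpoly_le.
Qed.

(* The square of an element supported on [a, a + r) misses the positions
   [probe a], even after reduction; the probes of 0, ..., r cover 0, ..., 2r. *)
Definition probe (a : nat) : nat * nat :=
  if a is a'.+1 then (2 * a', 2 * a' + 1)%N else (2 * r - 1, 2 * r)%N.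

Definition probe_coef (a : nat) (z : E) : F * F :=
  ((z : {poly F})`_(probe a).1, (z : {poly F})`_(probe a).2).

Lemma probe_coefD a (u w : E) : probe_coef a (u + w) = probe_coef a u + probe_coef a w.
Proof. by rewrite /probe_coef !coefD. Qed.

Lemma probe_coef0 a : probe_coef a 0 = 0.
Proof. by rewrite /probe_coef !coef0. Qed.

Lemma probe_coef_sqr (v : E) (a : nat) : (a <= r)%N ->
    (forall i, (i < a)%N || (a + r <= i)%N -> (v : {poly F})`_i = 0) ->
  probe_coef a (v * v) = 0.
Proof.
move=> a_le_r v_supp; have sqr0 := coef_sqr_out_window v_supp.
have [lt1 lt2] : ((probe a).1 < t)%N /\ ((probe a).2 < t)%N.
  by case: a {v_supp sqr0} a_le_r => /= *; lia.
rewrite /probe_coef !coef_qfpolyM // !sqr0 ?mulr0 ?addr0 //.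
all: by case: a {v_supp sqr0 lt1 lt2} a_le_r => /= *; lia.
Qed.

Lemma probe_coef_eq0 (z : E) : (forall a : 'I_r.+1, probe_coef a z = 0) -> z = 0.
Proof.
move=> z_probe; apply/val_inj/polyP => i; rewrite coef0.
have [t_le_i | i_lt_t] := leqP t i; first exact: coef_qfpoly_out.
have [a a_probe] : exists a : 'I_r.+1, i = (probe a).1 \/ i = (probe a).2.
  have [r_le_i | i_lt_r] := leqP (2 * r) i.
    by exists ord0; right; rewrite /=; lia.
  have a_lt : (i./2.+1 < r.+1)%N.
    by rewrite ltnS ltn_half_double -mul2n.
  exists (Ordinal a_lt) => /=; have := odd_double_half i; rewrite -mul2n.
  by case: (odd i) => /= ?; [right | left]; lia.
have [/(congr1 fst) z1 /(congr1 snd) z2] := (z_probe a, z_probe a).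
by case: a_probe => ->.
Qed.

Definition kept (a : nat) (s : 'I_r.+1) : nat := if (s < a)%N then val s else (s + r)%N.

Lemma kept_eq_window (x y : E) (a : nat) : (a <= r)%N ->
    (forall s, (x : {poly F})`_(kept a s) = (y : {poly F})`_(kept a s)) ->
  forall i, (i < a)%N || (a + r <= i)%N -> ((x - y : E) : {poly F})`_i = 0.
Proof.
move=> a_le_r xy_kept i i_out; apply/eqP; rewrite coefB subr_eq0; apply/eqP.
have [t_le_i | i_lt_t] := leqP t i; first by rewrite !coef_qfpoly_out.
have [s i_kept] : exists s : 'I_r.+1, i = kept a s.
  have [i_lt_a | a_le_i] := ltnP i a.
    have i_lt : (i < r.+1)%N by lia.
    by exists (Ordinal i_lt); rewrite /kept /= i_lt_a.
  have i_lt : (i - r < r.+1)%N by lia.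
  by exists (Ordinal i_lt); rewrite /kept /= ifF; lia.
by rewrite i_kept.
Qed.

Hypothesis two_neq0 : (2%:R : F) != 0.

Definition defect (x : E * E) : E := x.2 - 2%:R * x.1 ^+ 2.

Definition colour (x : E * E) : option ('I_r.+1 * {ffun 'I_r.+1 -> F} * bool) :=
  if [pick a : 'I_r.+1 | probe_coef a (defect x) != 0] is Some a then
    Some (a, [ffun s => (x.1 : {poly F})`_(kept a s)],
          @half (F * F)%type -%R (probe_coef a (defect x)))
  else None.

Lemma defect_adj (x y : E * E) :
  (x.1 + y.1) ^+ 2 = x.2 + y.2 -> defect x + defect y + (x.1 - y.1) ^+ 2 = 0.
Proof. by move=> adj; rewrite /defect -[x.2](addrK y.2) -adj; ring. Qed.

Lemma colour_proper (x y : E * E) : G_adj E x y -> colour x != colour y.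
Proof.
case/andP=> x_neq_y /eqP /defect_adj sum0.
rewrite /colour; case: pickP => [a xa | x0]; case: pickP => [b yb | y0] //.
  apply/negP => /eqP [<- {b yb} x1y1 half_xy].
  have xy_kept s : (x.1 : {poly F})`_(kept a s) = (y.1 : {poly F})`_(kept a s).
    by have := congr1 (fun f : {ffun _ -> F} => f s) x1y1; rewrite !ffunE.
  have sqr0 := probe_coef_sqr (leq_ord a) (kept_eq_window (leq_ord a) xy_kept).
  have y_opp : probe_coef a (defect y) = - probe_coef a (defect x).
    apply/eqP; rewrite -addr_eq0 addrC.
    have := congr1 (probe_coef a) sum0.
    by rewrite !probe_coefD expr2 sqr0 addr0 probe_coef0 => ->.
  have := @half_inv (F * F)%type -%R _ opprK (pair_neq_opp two_neq0 xa).
  by rewrite -y_opp half_xy; case: (half _ _).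
have [dx0 dy0] : defect x = 0 /\ defect y = 0.
  by split; apply: probe_coef_eq0 => a; apply/eqP; rewrite -[_ == _]negbK ?x0 ?y0.
move: sum0; rewrite dx0 dy0 !add0r => /eqP; rewrite expf_eq0 /= subr_eq0 => /eqP x1_eq.
move: dx0 dy0; rewrite /defect -x1_eq => /eqP + /eqP.
rewrite !subr_eq0 => /eqP <- /eqP x2_eq.
by move: x_neq_y; rewrite -pair_eqE /pair_eq /= x1_eq x2_eq !eqxx.
Qed.

Lemma colorableb_qfpoly : colorableb (G_adj E) (r.+1 * #|F| ^ r.+1 * 2).+1.
Proof.
have := colorableb_proper (fun x y _ => @colour_proper x y).
by rewrite card_option !card_prod card_ord card_ffun card_ord card_bool.
Qed.

End QuotientColouring.

Lemma finField_genPoly_dvdp_root (E : finFieldType) (h : {poly E}) :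
  size h != 1%N -> h %| 'X^#|E| - 'X -> exists x, root h x.
Proof.
move=> h_nconst; rewrite finField_genPoly => /dvdp_prod_XsubC[m].
case: (mask m (index_enum E)) => [|x s] Dh.
  by rewrite big_nil -size_poly_eq1 (negbTE h_nconst) in Dh.
by exists x; rewrite (eqp_root Dh) big_cons rootM root_XsubC eqxx.
Qed.

Lemma expf_card_pred (K : finFieldType) (x : K) : x != 0 -> x ^+ #|K|.-1 = 1.
Proof.
move=> x_neq0; apply: (mulIf x_neq0).
by rewrite -exprSr prednK ?expf_card ?mul1r // ltnW ?finNzRing_gt1.
Qed.

Lemma finField_primitive_root (K : finFieldType) :
  exists a : K, (#|K|.-1).-primitive_root a.
Proof.
have /hasP[a _ a_prim] : has (#|K|.-1).-primitive_root (enum (predC1 (0 : K))).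
  apply: has_prim_root; rewrite ?enum_uniq -?cardE ?cardC1 //.
    by rewrite -ltnS prednK ?finNzRing_gt1 // ltnW ?finNzRing_gt1.
  by apply/allP => x; rewrite mem_enum unity_rootE => /expf_card_pred ->.
by exists a.
Qed.

Section FinFieldEmbedding.
Variables (p : nat) (K E : finFieldType).
Hypotheses (chK : p \in [pchar K]) (chE : p \in [pchar E]).
Local Notation Kp := (pPrimeCharType chK).
Local Notation Ep := (pPrimeCharType chE).

Variables (a : Kp) (g : {poly 'F_p}).
Hypotheses (a_prim : (#|K|.-1).-primitive_root a)
  (g_minPoly : minPoly 1 a = map_poly (in_alg Kp) g).

Lemma minPoly_dvdp_Fp (f : {poly 'F_p}) : root (map_poly (in_alg Kp) f) a -> g %| f.
Proof.
move=> f_a; rewrite -(dvdp_map (in_alg Kp)) -g_minPoly minPoly_dvdp //.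
by apply/polyOver1P; exists f.
Qed.

Lemma minPoly_dvdp_genPoly_Fp : g %| 'X^#|K| - 'X.
Proof.
apply: minPoly_dvdp_Fp; rewrite rmorphB rmorphXn /= map_polyX.
by rewrite /root hornerD hornerN hornerXn hornerX expf_card subrr.
Qed.

Definition dlog_poly (x : Kp) : {poly 'F_p} :=
  if [pick i : 'I_#|K| | a ^+ i == x] is Some i then 'X^i else 0.

Lemma dlog_polyK x : (map_poly (in_alg Kp) (dlog_poly x)).[a] = x.
Proof.
rewrite /dlog_poly; case: pickP => [i /eqP <- | no_log].
  by rewrite map_polyXn hornerXn.
rewrite rmorph0 horner0; apply/esym/eqP/negPn/negP => x_neq0.
have [i x_a] := prim_rootP a_prim (expf_card_pred x_neq0).
by have := no_log (widen_ord (leq_pred _) i); rewrite /= x_a eqxx.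
Qed.

Variable b : Ep.
Hypothesis g_b : root (map_poly (in_alg Ep) g) b.

Lemma root_transfer (f : {poly 'F_p}) :
  root (map_poly (in_alg Kp) f) a -> root (map_poly (in_alg Ep) f) b.
Proof. by move/minPoly_dvdp_Fp/divpK <-; rewrite rmorphM rootM g_b orbT. Qed.

Lemma eval_transfer (f h : {poly 'F_p}) :
    (map_poly (in_alg Kp) f).[a] = (map_poly (in_alg Kp) h).[a] ->
  (map_poly (in_alg Ep) f).[b] = (map_poly (in_alg Ep) h).[b].
Proof.
move=> fh_a; have := root_transfer (f := f - h).
rewrite /root !rmorphB !hornerD !hornerN fh_a subrr eqxx => /(_ isT).
by rewrite subr_eq0 => /eqP.
Qed.

Definition dlog_eval (x : Kp) : Ep := (map_poly (in_alg Ep) (dlog_poly x)).[b].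

Lemma dlog_eval_is_zmod_morphism : zmod_morphism dlog_eval.
Proof.
move=> x y; rewrite /dlog_eval -hornerN -hornerD -!rmorphB; apply: eval_transfer.
by rewrite rmorphB hornerD hornerN !dlog_polyK.
Qed.

Lemma dlog_eval_is_monoid_morphism : monoid_morphism dlog_eval.
Proof.
split=> [|x y]; rewrite /dlog_eval.
  transitivity (map_poly (in_alg Ep) 1).[b]; last by rewrite rmorph1 hornerC.
  by apply: eval_transfer; rewrite dlog_polyK rmorph1 hornerC.
rewrite -hornerM -rmorphM; apply: eval_transfer.
by rewrite rmorphM hornerM !dlog_polyK.
Qed.

End FinFieldEmbedding.

Lemma finField_rmorphism (K E : finFieldType) :
  #|K| = #|E| -> exists f : {rmorphism K -> E}, bijective f.
Proof.
move=> cardKE; have [p p_prime chK] := finPcharP K.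
have chE : p \in [pchar E].
  by apply: (card_finPcharP _ p_prime); rewrite -cardKE (card_pprimeChar chK).
have [a a_prim] := finField_primitive_root K.
have /polyOver1P[g g_minPoly] := minPolyOver (1%AS : {subfield pPrimeCharType chK}) a.
have [b g_b] : exists b : pPrimeCharType chE, root (map_poly (in_alg _) g) b.
  apply: finField_genPoly_dvdp_root.
    rewrite size_map_poly -(size_map_poly (in_alg (pPrimeCharType chK))).
    by rewrite -g_minPoly size_minPoly.
  have -> : 'X^#|E| - 'X = map_poly (in_alg (pPrimeCharType chE)) ('X^#|K| - 'X).
    by rewrite rmorphB rmorphXn /= map_polyX cardKE.
  by rewrite dvdp_map (minPoly_dvdp_genPoly_Fp g_minPoly).
pose f := HB.pack_for (GRing.RMorphism.type _ _) (dlog_eval a b)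
  (GRing.isZmodMorphism.Build _ _ _
     (dlog_eval_is_zmod_morphism a_prim g_minPoly g_b))
  (GRing.isMonoidMorphism.Build _ _ _
     (dlog_eval_is_monoid_morphism a_prim g_minPoly g_b)).
by exists f; apply: inj_card_bij; [exact: fmorph_inj | rewrite cardKE].
Qed.

Local Close Scope ring_scope.

Section RealBound.
Local Open Scope R_scope.

Lemma INR_expn (m n : nat) : INR (m ^ n)%N = INR m ^ n.
Proof. by elim: n => [|n IH] //=; rewrite expnS -multE mult_INR IH. Qed.

Lemma colour_count_le (r q : nat) : (1 <= r)%N -> (1 <= q)%N ->
  INR (r.+1 * q ^ r.+1 * 2).+1 <=
    Rplus
      (Rmult (Rdiv (INR (2 * r + 5)) (INR 3))
             (Rpower (INR q) (Rplus (Rdiv (INR (4 * r)) (INR 3)) (INR 1))))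
      (Rmult (INR (2 * r + 1)) (pow (INR q) (r + 1))).
Proof.
move=> /leP/le_INR r_ge1 /leP/le_INR q_ge1; rewrite /= in r_ge1 q_ge1.
set Q := INR q ^ (r + 1).
have Q_ge1 : 1 <= Q by apply: pow_R1_Rle.
have Q_le : Q <= Rpower (INR q) (INR (4 * r) / INR 3 + INR 1).
  rewrite /Q -Rpower_pow; last by lra.
  by apply: Rle_Rpower => //; rewrite -multE mult_INR plus_INR /=; lra.
have -> : INR (r.+1 * q ^ r.+1 * 2).+1 = 2 * (INR r + 1) * Q + 1.
  by rewrite S_INR -!multE !mult_INR INR_expn S_INR /Q addn1 /=; lra.
move: Q_le; set Rq := Rpower _ _ => Q_le.
rewrite -!plusE -!multE !plus_INR /=; nra.
Qed.
End RealBound.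

Lemma pchar_odd_two_neq0 (R : nzRingType) (p : nat) :
  (p \in [pchar R])%R -> odd p -> (2%:R != 0 :> R)%R.
Proof.
move=> chR p_odd; apply/negP => two0.
have /(dvdn_leq (isT : (0 < 2)%N)) p_le2 : (p %| 2)%N by rewrite (dvdn_pcharf chR) two0.
by have := prime_gt1 (pcharf_prime chR); case: p p_odd p_le2 {chR} => [|[|[]]].
Qed.

Theorem theorem3p4 (p k q r : nat) (F K : finFieldType) :
  prime p -> odd p -> (0 < k)%N -> q = (p ^ k)%N ->
  #|F| = q -> (1 <= r)%N -> #|K| = (q ^ (2 * r + 1))%N ->
  (exists mu : F, irreducible_poly ('X^(2 * r + 1) - mu%:P)%R) ->
  Rle (INR (chromatic_number (G_adj K)))
      (Rplus
        (Rmult (Rdiv (INR (2 * r + 5)) (INR 3))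
               (Rpower (INR q) (Rplus (Rdiv (INR (4 * r)) (INR 3)) (INR 1))))
        (Rmult (INR (2 * r + 1)) (pow (INR q) (r + 1)))).
Proof.
move=> p_prime p_odd _ q_def cardF r_ge1 cardK [mu P_irr].
have P_mi : monic_irreducible_poly ('X^(2 * r + 1) - mu%:P)%R.
  by split; last by rewrite monicXnsubC // addn1.
have two_neq0 : (2%:R != 0 :> F)%R.
  exact: pchar_odd_two_neq0 (card_finPcharP (etrans cardF q_def) p_prime) p_odd.
have [f _] : exists f : {rmorphism K -> {poly %/ _ with P_mi}}, bijective f.
  apply: finField_rmorphism.
  by rewrite card_qfpoly size_XnsubC /= ?cardF ?cardK // addn1.
have colK := colorableb_G_adj_rmorph f (colorableb_qfpoly P_mi two_neq0).
apply: Rle_trans (le_INR _ _ (leP (chromatic_number_le colK))) _.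
by rewrite cardF; apply: colour_count_le => //; rewrite q_def expn_gt0 prime_gt0.
Qed.
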